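(* Let $D:\mathbb R^2\setminus\{0\}\to\mathbb R$ be nonnegative, bounded and continuously differentiable, and let $x:[a,b]\to\mathbb R^2\setminus\{0\}$ be a nonrectilinear solution of $\ddot x+D(x)\dot x=-x/|x|^3$. Set $r=|x|$, $c=\det(x,\dot x)$ and $v=-\frac1r+\frac{c^2}{2r^2}$. If $\dot r(t)\ge0$ for all $t\in[a,b]$ and $v(b)\ge0$, then $\dot v\le0$ on $[a,b]$.
   Context: A solution is nonrectilinear if $\det(x,\dot x)$ is not identically zero. *)

From Stdlib Require Import Reals.
From Coquelicot Require Import Coquelicot.
Open Scope R_scope.

Definition has_deriv_on (a b : R) (f : R -> R) (t l : R) : Prop :=
  forall eps : R, 0 < eps -> exists delta : R, 0 < delta /\
    forall s : R, a <= s <= b -> s <> t -> Rabs (s - t) < delta ->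
      Rabs ((f s - f t) / (s - t) - l) < eps.

Definition C1_punctured (D : R -> R -> R) : Prop :=
  exists Dx Dy : R -> R -> R,
    forall p q : R, (p, q) <> (0, 0) ->
      differentiable_pt_lim D p q (Dx p q) (Dy p q) /\
      continuity_2d_pt Dx p q /\ continuity_2d_pt Dy p q.

Definition norm2 (p q : R) : R := sqrt (p ^ 2 + q ^ 2).
Definition det2 (p1 p2 q1 q2 : R) : R := p1 * q2 - p2 * q1.

(* With c = det(x, x'), the equation gives c' = -D(x) c because the central force
   is parallel to x.  Hence w = c^2 - 2r = 2 r^2 v satisfies w' = -2 D c^2 - 2 r' <= 0,
   so w >= w(b) = 2 r(b)^2 v(b) >= 0 on [a,b].  Then v = w / (2 r^2) is the product of
   the nonnegative nonincreasing w and the positive nonincreasing 1 / (2 r^2), so v' <= 0. *)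

From Stdlib Require Import Reals Lra.
From Coquelicot Require Import Coquelicot.
Open Scope R_scope.

Lemma filterlim_Rplus {T} {F : (T -> Prop) -> Prop} {FF : Filter F} (f g : T -> R) (x y : R) :
  filterlim f F (locally x) -> filterlim g F (locally y) ->
  filterlim (fun s => f s + g s) F (locally (x + y)).
Proof.
  intros Hf Hg.
  eapply filterlim_comp_2; [exact Hf | exact Hg | exact (filterlim_plus x y)].
Qed.

Lemma filterlim_Rmult {T} {F : (T -> Prop) -> Prop} {FF : Filter F} (f g : T -> R) (x y : R) :
  filterlim f F (locally x) -> filterlim g F (locally y) ->
  filterlim (fun s => f s * g s) F (locally (x * y)).
Proof.
  intros Hf Hg.
  eapply filterlim_comp_2; [exact Hf | exact Hg | exact (@filterlim_mult R_AbsRing x y)].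
Qed.

Lemma sum_sq_pos (p q : R) : (p, q) <> (0, 0) -> 0 < p * p + q * q.
Proof.
  intros Hpq.
  destruct (Req_dec p 0) as [-> | Hp]; [destruct (Req_dec q 0) as [-> | Hq] |].
  - now contradiction Hpq.
  - pose proof (Rsqr_pos_lt q Hq). unfold Rsqr in *. lra.
  - pose proof (Rsqr_pos_lt p Hp). pose proof (Rle_0_sqr q). unfold Rsqr in *. lra.
Qed.

Lemma norm2_pos (p q : R) : (p, q) <> (0, 0) -> 0 < norm2 p q.
Proof.
  intros Hpq. apply sqrt_lt_R0.
  replace (p ^ 2 + q ^ 2) with (p * p + q * q) by ring. now apply sum_sq_pos.
Qed.

Section IntervalDerivative.

Variables a b : R.

Definition punctured_interval (t s : R) : Prop := a <= s <= b /\ s <> t.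

Definition near_in (t : R) : (R -> Prop) -> Prop :=
  within (punctured_interval t) (locally t).

#[global] Instance near_in_filter t : Filter (near_in t).
Proof. apply within_filter, locally_filter. Qed.

Definition diff_quot (f : R -> R) (t s : R) : R := (f s - f t) / (s - t).

Lemma has_deriv_onE (f : R -> R) (t l : R) :
  has_deriv_on a b f t l <-> filterlim (diff_quot f t) (near_in t) (locally l).
Proof.
  split.
  - intros H. apply filterlim_locally. intros eps.
    destruct (H eps (cond_pos eps)) as [d [Hd Hs]].
    exists (mkposreal d Hd). intros s Hst [Hab Hne]. now apply Hs.
  - intros H eps Heps.
    destruct (proj1 (filterlim_locally _ _) H (mkposreal eps Heps)) as [d Hd].
    exists d. split; [apply cond_pos |]. intros s Hab Hne Hst. exact (Hd s Hst (conj Hab Hne)).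
Qed.

Lemma near_in_proper (t : R) : a < b -> a <= t <= b -> ProperFilter' (near_in t).
Proof.
  intros Hab Ht. constructor; [| apply near_in_filter].
  intros [d Hd]. pose proof (cond_pos d) as Hd0.
  destruct (Rlt_or_le t b) as [Htb | Htb].
  - pose (h := Rmin d (b - t) / 2).
    assert (0 < h /\ h < d /\ h < b - t) as (Hh0 & Hhd & Hhb).
    { pose proof (Rmin_l d (b - t)). pose proof (Rmin_r d (b - t)).
      pose proof (Rmin_pos d (b - t) Hd0 ltac:(lra)). unfold h. lra. }
    apply (Hd (t + h)).
    + change (Rabs (t + h - t) < d). rewrite Rabs_right; lra.
    + split; [split |]; lra.
  - pose (h := Rmin d (t - a) / 2).
    assert (0 < h /\ h < d /\ h < t - a) as (Hh0 & Hhd & Hha).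
    { pose proof (Rmin_l d (t - a)). pose proof (Rmin_r d (t - a)).
      pose proof (Rmin_pos d (t - a) Hd0 ltac:(lra)). unfold h. lra. }
    apply (Hd (t - h)).
    + change (Rabs (t - h - t) < d). rewrite Rabs_left; lra.
    + split; [split |]; lra.
Qed.

Lemma has_deriv_on_unique (f : R -> R) (t l1 l2 : R) : a < b -> a <= t <= b ->
  has_deriv_on a b f t l1 -> has_deriv_on a b f t l2 -> l1 = l2.
Proof.
  intros Hab Ht H1 H2. apply has_deriv_onE in H1, H2.
  exact (@filterlim_locally_unique _ R_AbsRing R_NormedModule _
           (near_in_proper t Hab Ht) _ _ _ H1 H2).
Qed.

Lemma filterlim_near_in_ext (f g : R -> R) (t l : R) :
  (forall s, a <= s <= b -> s <> t -> f s = g s) ->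
  filterlim f (near_in t) (locally l) -> filterlim g (near_in t) (locally l).
Proof.
  intros Hfg. apply filterlim_ext_loc. unfold near_in, within.
  apply filter_forall. intros s [Hs Hne]. auto.
Qed.

Lemma has_deriv_on_continuous (f : R -> R) (t l : R) :
  has_deriv_on a b f t l -> filterlim f (near_in t) (locally (f t)).
Proof.
  intros H. apply has_deriv_onE in H.
  assert (Hlin : filterlim (fun s => f t + diff_quot f t s * (s - t)) (near_in t)
                   (locally (f t + l * (t - t)))).
  { apply filterlim_Rplus; [apply filterlim_const |].
    apply filterlim_Rmult; [exact H |].
    apply filterlim_Rplus; [| apply filterlim_const].
    intros P HP. apply filter_imp with (2 := HP). auto. }
  replace (f t + l * (t - t)) with (f t) in Hlin by ring.
  revert Hlin. apply filterlim_near_in_ext. intros s _ Hne. unfold diff_quot. field. lra.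
Qed.

Lemma has_deriv_on_eq (f g : R -> R) (t l l' : R) :
  a <= t <= b -> (forall s, a <= s <= b -> f s = g s) ->
  l = l' -> has_deriv_on a b f t l -> has_deriv_on a b g t l'.
Proof.
  intros Ht Hfg <- H eps Heps. destruct (H eps Heps) as [d [Hd Hs]].
  exists d; split; auto. intros s Hsab Hne Hst. rewrite <- !Hfg; auto.
Qed.

Lemma has_deriv_on_const (k t : R) : has_deriv_on a b (fun _ => k) t 0.
Proof.
  intros eps Heps. exists 1. split; [lra |]. intros s _ Hne _.
  replace ((k - k) / (s - t) - 0) with 0 by (field; lra). rewrite Rabs_R0. lra.
Qed.

Lemma has_deriv_on_plus (f g : R -> R) (t lf lg : R) :
  has_deriv_on a b f t lf -> has_deriv_on a b g t lg ->
  has_deriv_on a b (fun s => f s + g s) t (lf + lg).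
Proof.
  rewrite !has_deriv_onE. intros Hf Hg.
  generalize (filterlim_Rplus _ _ _ _ Hf Hg). apply filterlim_near_in_ext.
  intros s _ Hne. unfold diff_quot. field. lra.
Qed.

Lemma has_deriv_on_mult (f g : R -> R) (t lf lg : R) :
  has_deriv_on a b f t lf -> has_deriv_on a b g t lg ->
  has_deriv_on a b (fun s => f s * g s) t (f t * lg + g t * lf).
Proof.
  intros Hf Hg. pose proof (has_deriv_on_continuous _ _ _ Hf) as Cf.
  rewrite has_deriv_onE in *.
  generalize (filterlim_Rplus _ _ _ _ (filterlim_Rmult _ _ _ _ Cf Hg)
                (filterlim_Rmult _ _ _ _ (filterlim_const (g t)) Hf)).
  apply filterlim_near_in_ext. intros s _ Hne. unfold diff_quot. field. lra.
Qed.

Lemma has_deriv_on_scal (k : R) (f : R -> R) (t l : R) :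
  has_deriv_on a b f t l -> has_deriv_on a b (fun s => k * f s) t (k * l).
Proof.
  intros Hf. replace (k * l) with (k * l + f t * 0) by ring.
  exact (has_deriv_on_mult _ _ _ _ _ (has_deriv_on_const k t) Hf).
Qed.

Lemma has_deriv_on_minus (f g : R -> R) (t lf lg : R) :
  has_deriv_on a b f t lf -> has_deriv_on a b g t lg ->
  has_deriv_on a b (fun s => f s - g s) t (lf - lg).
Proof.
  rewrite !has_deriv_onE. intros Hf Hg.
  replace (lf - lg) with (lf + -1 * lg) by ring.
  generalize (filterlim_Rplus _ _ _ _ Hf (filterlim_Rmult _ _ _ _ (filterlim_const (-1)) Hg)).
  apply filterlim_near_in_ext. intros s _ Hne. unfold diff_quot. field. lra.
Qed.

Lemma has_deriv_on_inv (f : R -> R) (t l : R) :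
  a <= t <= b -> (forall s, a <= s <= b -> f s <> 0) ->
  has_deriv_on a b f t l -> has_deriv_on a b (fun s => / f s) t (- l / f t ^ 2).
Proof.
  intros Ht Hf0 Hf. pose proof (has_deriv_on_continuous _ _ _ Hf) as Cf.
  rewrite has_deriv_onE in *.
  assert (Cinv : filterlim (fun s => / f s) (near_in t) (locally (/ f t))).
  { eapply filterlim_comp; [exact Cf | exact (continuous_Rinv _ (Hf0 t Ht))]. }
  replace (- l / f t ^ 2) with (-1 * l * / f t * / f t) by (field; auto).
  generalize (filterlim_Rmult _ _ _ _
    (filterlim_Rmult _ _ _ _ (filterlim_Rmult _ _ _ _ (filterlim_const (-1)) Hf) Cinv)
    (filterlim_const (/ f t))).
  apply filterlim_near_in_ext. intros s Hs Hne.
  pose proof (Hf0 s Hs). pose proof (Hf0 t Ht). unfold diff_quot. field. lra.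
Qed.

Lemma has_deriv_on_sqrt (f : R -> R) (t l : R) :
  a <= t <= b -> (forall s, a <= s <= b -> 0 < f s) ->
  has_deriv_on a b f t l -> has_deriv_on a b (fun s => sqrt (f s)) t (l / (2 * sqrt (f t))).
Proof.
  intros Ht Hf0 Hf. pose proof (has_deriv_on_continuous _ _ _ Hf) as Cf.
  rewrite has_deriv_onE in *.
  assert (Hsq : forall s, a <= s <= b -> 0 < sqrt (f s) /\ sqrt (f s) * sqrt (f s) = f s).
  { intros s Hs. pose proof (Hf0 s Hs).
    split; [apply sqrt_lt_R0 | apply sqrt_sqrt]; lra. }
  destruct (Hsq t Ht) as [Ht0 Htt].
  assert (Csqrt : filterlim (fun s => sqrt (f s)) (near_in t) (locally (sqrt (f t)))).
  { eapply filterlim_comp; [exact Cf | apply continuous_sqrt]. }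
  assert (Cden : filterlim (fun s => / (sqrt (f s) + sqrt (f t))) (near_in t)
                   (locally (/ (sqrt (f t) + sqrt (f t))))).
  { eapply filterlim_comp; [exact (filterlim_Rplus _ _ _ _ Csqrt (filterlim_const _)) |].
    apply continuous_Rinv. lra. }
  replace (l / (2 * sqrt (f t))) with (l * / (sqrt (f t) + sqrt (f t))) by (field; lra).
  generalize (filterlim_Rmult _ _ _ _ Hf Cden).
  apply filterlim_near_in_ext. intros s Hs Hne. destruct (Hsq s Hs) as [Hs0 Hss].
  unfold diff_quot. rewrite <- Hss, <- Htt at 1. field. lra.
Qed.

Lemma has_deriv_on_norm2 (f g : R -> R) (t lf lg : R) :
  a <= t <= b -> (forall s, a <= s <= b -> (f s, g s) <> (0, 0)) ->
  has_deriv_on a b f t lf -> has_deriv_on a b g t lg ->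
  has_deriv_on a b (fun s => norm2 (f s) (g s)) t
    ((f t * lf + g t * lg) / norm2 (f t) (g t)).
Proof.
  intros Ht Hfg0 Hf Hg.
  assert (Hpos : forall s, a <= s <= b -> 0 < f s * f s + g s * g s).
  { intros s Hs. exact (sum_sq_pos _ _ (Hfg0 s Hs)). }
  pose proof (has_deriv_on_sqrt _ _ _ Ht Hpos
    (has_deriv_on_plus _ _ _ _ _ (has_deriv_on_mult _ _ _ _ _ Hf Hf)
                                 (has_deriv_on_mult _ _ _ _ _ Hg Hg))) as H.
  revert H. apply has_deriv_on_eq; auto.
  - intros s _. unfold norm2. f_equal. ring.
  - pose proof (sqrt_lt_R0 _ (Hpos t Ht)). unfold norm2.
    replace (f t ^ 2 + g t ^ 2) with (f t * f t + g t * g t) by ring. field. lra.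
Qed.

Lemma has_deriv_on_det2 (f1 f2 g1 g2 : R -> R) (t l1 l2 m1 m2 : R) :
  has_deriv_on a b f1 t l1 -> has_deriv_on a b f2 t l2 ->
  has_deriv_on a b g1 t m1 -> has_deriv_on a b g2 t m2 ->
  has_deriv_on a b (fun s => det2 (f1 s) (f2 s) (g1 s) (g2 s)) t
    (det2 l1 l2 (g1 t) (g2 t) + det2 (f1 t) (f2 t) m1 m2).
Proof.
  intros H1 H2 H3 H4.
  pose proof (has_deriv_on_minus _ _ _ _ _ (has_deriv_on_mult _ _ _ _ _ H1 H4)
                (has_deriv_on_mult _ _ _ _ _ H2 H3)) as H.
  unfold det2. replace (l1 * g2 t - l2 * g1 t + (f1 t * m2 - f2 t * m1))
    with (f1 t * m2 + g2 t * l1 - (f2 t * m1 + g1 t * l2)) by ring.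
  exact H.
Qed.

Lemma has_deriv_on_interior (f : R -> R) (t l : R) :
  a < t < b -> has_deriv_on a b f t l -> derivable_pt_lim f t l.
Proof.
  intros Ht H eps Heps. destruct (H eps Heps) as [d [Hd Hs]].
  assert (Hm : 0 < Rmin d (Rmin (t - a) (b - t))) by (repeat apply Rmin_pos; lra).
  exists (mkposreal _ Hm). intros h Hh Hlt. simpl in Hlt.
  pose proof (Rmin_l d (Rmin (t - a) (b - t))). pose proof (Rmin_r d (Rmin (t - a) (b - t))).
  pose proof (Rmin_l (t - a) (b - t)). pose proof (Rmin_r (t - a) (b - t)).
  pose proof (Rabs_def2 h _ Hlt).
  specialize (Hs (t + h)). replace (t + h - t) with h in Hs by ring.
  apply Hs; lra.
Qed.

Lemma has_deriv_on_closed_limit (f : R -> R) (P : R -> Prop) (p l d : R) :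
  a < b -> a <= p <= b -> 0 < d -> has_deriv_on a b f p l -> closed P ->
  (forall s, a <= s <= b -> s <> p -> Rabs (s - p) < d -> P (f s)) -> P (f p).
Proof.
  intros Hab Hp Hd Hf HP Hnear.
  apply (@closed_filterlim_loc _ _ _ (near_in_proper p Hab Hp) f P (f p)); auto.
  - exact (has_deriv_on_continuous _ _ _ Hf).
  - exists (mkposreal d Hd). intros s Hs [Hsab Hne]. exact (Hnear s Hsab Hne Hs).
Qed.

Lemma has_deriv_on_nonpos_le_end (f f' : R -> R) :
  a < b -> (forall s, a <= s <= b -> has_deriv_on a b f s (f' s) /\ f' s <= 0) ->
  forall t, a <= t <= b -> f b <= f t.
Proof.
  intros Hab Hf.
  assert (Hinner : forall s1 s2, a < s1 < s2 -> s2 < b -> f s2 <= f s1).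
  { intros s1 s2 Hs1 Hs2.
    destruct (MVT_cor2 f f' s1 s2 ltac:(lra)) as [c [Hc Hcin]].
    { intros c Hc. apply has_deriv_on_interior; [lra | apply Hf; lra]. }
    assert (f' c <= 0) by (apply Hf; lra).
    assert (f' c * (s2 - s1) <= 0) by (apply Rmult_le_0_r; lra). lra. }
  assert (Hopen : forall t, a < t <= b -> f b <= f t).
  { intros t Ht. destruct (Req_dec t b) as [-> | Htb]; [lra |].
    apply (has_deriv_on_closed_limit f (fun z => z <= f t) b (f' b) (b - t));
      [lra | lra | lra | apply Hf; lra | apply closed_le |].
    intros s Hs Hsb Hst. pose proof (Rabs_def2 _ _ Hst). apply Hinner; lra. }
  intros t Ht. destruct (Req_dec t a) as [-> | Hta]; [| apply Hopen; lra].
  apply (has_deriv_on_closed_limit f (fun z => f b <= z) a (f' a) 1);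
    [lra | lra | lra | apply Hf; lra | apply closed_ge |].
  intros s Hs Hsa _. apply Hopen. lra.
Qed.

End IntervalDerivative.

Section DampedKepler.

Variables (D : R -> R -> R) (a b : R) (x1 x2 y1 y2 : R -> R).

Hypothesis ab : a < b.
Hypothesis D_nonneg : forall p q, (p, q) <> (0, 0) -> 0 <= D p q.
Hypothesis x_nonzero : forall t, a <= t <= b -> (x1 t, x2 t) <> (0, 0).
Hypothesis x_solves : forall t, a <= t <= b ->
  has_deriv_on a b x1 t (y1 t) /\ has_deriv_on a b x2 t (y2 t) /\
  has_deriv_on a b y1 t (- D (x1 t) (x2 t) * y1 t - x1 t / norm2 (x1 t) (x2 t) ^ 3) /\
  has_deriv_on a b y2 t (- D (x1 t) (x2 t) * y2 t - x2 t / norm2 (x1 t) (x2 t) ^ 3).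

Definition radius (t : R) : R := norm2 (x1 t) (x2 t).
Definition ang_mom (t : R) : R := det2 (x1 t) (x2 t) (y1 t) (y2 t).
Definition radial_speed (t : R) : R := (x1 t * y1 t + x2 t * y2 t) / radius t.
Definition energy (t : R) : R := - / radius t + ang_mom t ^ 2 / (2 * radius t ^ 2).
Definition scaled_energy (t : R) : R := ang_mom t * ang_mom t - 2 * radius t.

Hypothesis radius_nondecreasing :
  forall t l, a <= t <= b -> has_deriv_on a b radius t l -> 0 <= l.
Hypothesis energy_b_nonneg : 0 <= energy b.

Lemma radius_pos (t : R) : a <= t <= b -> 0 < radius t.
Proof. intros Ht. exact (norm2_pos _ _ (x_nonzero t Ht)). Qed.

Lemma radius_deriv (t : R) : a <= t <= b -> has_deriv_on a b radius t (radial_speed t).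
Proof.
  intros Ht. destruct (x_solves t Ht) as (Hx1 & Hx2 & _).
  exact (has_deriv_on_norm2 a b x1 x2 t _ _ Ht x_nonzero Hx1 Hx2).
Qed.

Lemma radial_speed_nonneg (t : R) : a <= t <= b -> 0 <= radial_speed t.
Proof. intros Ht. exact (radius_nondecreasing t _ Ht (radius_deriv t Ht)). Qed.

Lemma ang_mom_deriv (t : R) : a <= t <= b ->
  has_deriv_on a b ang_mom t (- D (x1 t) (x2 t) * ang_mom t).
Proof.
  intros Ht. destruct (x_solves t Ht) as (Hx1 & Hx2 & Hy1 & Hy2).
  generalize (has_deriv_on_det2 a b x1 x2 y1 y2 t _ _ _ _ Hx1 Hx2 Hy1 Hy2).
  apply has_deriv_on_eq; auto. unfold ang_mom, det2. field.
  apply Rgt_not_eq, radius_pos, Ht.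
Qed.

Lemma scaled_energy_deriv (t : R) : a <= t <= b ->
  has_deriv_on a b scaled_energy t
    (- 2 * (D (x1 t) (x2 t) * ang_mom t ^ 2 + radial_speed t)).
Proof.
  intros Ht.
  generalize (has_deriv_on_minus a b _ _ t _ _
    (has_deriv_on_mult a b _ _ t _ _ (ang_mom_deriv t Ht) (ang_mom_deriv t Ht))
    (has_deriv_on_scal a b 2 _ t _ (radius_deriv t Ht))).
  apply has_deriv_on_eq; auto. ring.
Qed.

Lemma scaled_energy_nonneg (t : R) : a <= t <= b -> 0 <= scaled_energy t.
Proof.
  intros Ht.
  assert (Hb : 0 <= scaled_energy b).
  { pose proof (radius_pos b ltac:(lra)).
    replace (scaled_energy b) with (2 * radius b ^ 2 * energy b)
      by (unfold scaled_energy, energy; field; lra).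
    apply Rmult_le_pos; [nra | exact energy_b_nonneg]. }
  enough (scaled_energy b <= scaled_energy t) by lra.
  apply (has_deriv_on_nonpos_le_end a b scaled_energy
    (fun s => - 2 * (D (x1 s) (x2 s) * ang_mom s ^ 2 + radial_speed s)) ab); auto.
  intros s Hs. split; [exact (scaled_energy_deriv s Hs) |].
  pose proof (D_nonneg _ _ (x_nonzero s Hs)). pose proof (radial_speed_nonneg s Hs).
  pose proof (pow2_ge_0 (ang_mom s)).
  assert (0 <= D (x1 s) (x2 s) * ang_mom s ^ 2) by (apply Rmult_le_pos; auto). lra.
Qed.

Lemma energy_deriv_nonpos (t : R) : a <= t <= b ->
  exists l, has_deriv_on a b energy t l /\ l <= 0.
Proof.
  intros Ht.
  pose (inv_r2 := fun s => / (2 * (radius s * radius s))).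
  assert (Hinv : has_deriv_on a b inv_r2 t
    (- (2 * (radius t * radial_speed t + radius t * radial_speed t))
       / (2 * (radius t * radius t)) ^ 2)).
  { apply (has_deriv_on_inv a b (fun s => 2 * (radius s * radius s))); auto.
    - intros s Hs. pose proof (radius_pos s Hs). nra.
    - apply has_deriv_on_scal, has_deriv_on_mult; apply radius_deriv, Ht. }
  eexists. split.
  - generalize (has_deriv_on_mult a b _ _ t _ _ (scaled_energy_deriv t Ht) Hinv).
    apply has_deriv_on_eq; auto.
    intros s Hs. pose proof (radius_pos s Hs).
    unfold inv_r2, scaled_energy, energy. field. lra.
  - pose proof (radius_pos t Ht). pose proof (radial_speed_nonneg t Ht).
    pose proof (scaled_energy_nonneg t Ht).
    pose proof (D_nonneg _ _ (x_nonzero t Ht)). pose proof (pow2_ge_0 (ang_mom t)).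
    assert (0 <= D (x1 t) (x2 t) * ang_mom t ^ 2) by (apply Rmult_le_pos; auto).
    assert (0 < inv_r2 t) by (apply Rinv_0_lt_compat; nra).
    assert (0 < (2 * (radius t * radius t)) ^ 2) by (apply pow_lt; nra).
    assert (0 <= (2 * (radius t * radial_speed t + radius t * radial_speed t))
                   / (2 * (radius t * radius t)) ^ 2)
      by (apply Rdiv_le_0_compat; nra).
    unfold Rdiv in *. nra.
Qed.

End DampedKepler.

Theorem lemma7p3 (D : R -> R -> R) (a b : R) (x1 x2 y1 y2 : R -> R) :
  a < b ->
  (* D nonnegative, bounded, C^1 on R^2 \ {0} *)
  (forall p q, (p, q) <> (0, 0) -> 0 <= D p q) ->
  (exists M, forall p q, (p, q) <> (0, 0) -> D p q <= M) ->
  C1_punctured D ->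
  (* x takes values in R^2 \ {0} on [a,b] *)
  (forall t, a <= t <= b -> (x1 t, x2 t) <> (0, 0)) ->
  (* x solves xddot + D(x) xdot = - x / |x|^3 on [a,b] *)
  (forall t, a <= t <= b ->
     has_deriv_on a b x1 t (y1 t) /\ has_deriv_on a b x2 t (y2 t) /\
     has_deriv_on a b y1 t
       (- D (x1 t) (x2 t) * y1 t - x1 t / norm2 (x1 t) (x2 t) ^ 3) /\
     has_deriv_on a b y2 t
       (- D (x1 t) (x2 t) * y2 t - x2 t / norm2 (x1 t) (x2 t) ^ 3)) ->
  (* nonrectilinear: det(x, xdot) not identically zero *)
  (exists t, a <= t <= b /\ det2 (x1 t) (x2 t) (y1 t) (y2 t) <> 0) ->
  let r := fun t => norm2 (x1 t) (x2 t) in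
  let c := fun t => det2 (x1 t) (x2 t) (y1 t) (y2 t) in
  let v := fun t => - / r t + c t ^ 2 / (2 * r t ^ 2) in
  (* rdot >= 0 on [a,b] *)
  (forall t l, a <= t <= b -> has_deriv_on a b r t l -> 0 <= l) ->
  0 <= v b ->
  forall t, a <= t <= b ->
    (exists l, has_deriv_on a b v t l) /\
    (forall l, has_deriv_on a b v t l -> l <= 0).
Proof.
  intros Hab HD0 _ _ Hnz Hsol _ r c v Hr Hvb t Ht.
  destruct (energy_deriv_nonpos D a b x1 x2 y1 y2 Hab HD0 Hnz Hsol Hr Hvb t Ht)
    as [L [HL HL0]].
  split.
  - exists L. exact HL.
  - intros l Hl. rewrite (has_deriv_on_unique a b v t l L Hab Ht Hl HL). exact HL0.
Qed.
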